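(* Let $M\geq 1$. A seller holds a set $\mathbb{M}$ of $M$ different goods, one unit of each, and has an arbitrary valuation function $\sigma$ over bundles of goods ($\sigma(X)$ is the seller's value for $X\subseteq\mathbb{M}$). The buyer has a unit-demand valuation: he values each item $i$ at $\beta_i$ and wants at most one item. The price of item $i$ is fixed exogenously at $p_i$, and both agents have utilities quasi-linear in money. Then the competitive ratio of any DSIC mechanism is at most $1/M$.
   Context: Selling item $i$ at price $p_i$ gives the buyer utility $b_i=\beta_i-p_i$ and the seller utility $s_i=p_i+\sigma(\mathbb{M}\setminus\{i\})-\sigma(\mathbb{M})$; option $0$ (no trade) gives both utility $0$. A mechanism receives the agents' reported valuations and outputs a probability distribution $(r_0,\dots,r_M)$ over which item (if any) is traded. It is DSIC if for each agent reporting the true valuation maximizes his expected utility ($\sum_i r_i b_i$ for the buyer, $\sum_i r_i s_i$ for the seller) whatever the other agent reports. The optimal gain-from-trade subject to individual rationality is $OPT=\max\{b_i+s_i: 0\leq i\leq M,\ b_i\geq 0,\ s_i\geq 0\}$ (with $b_0=s_0=0$); the mechanism's gain under truthful reports is $G=\sum_{i=1}^M r_i(b_i+s_i)$, and its competitive ratio is the minimum of $G/OPT$ over all valuation profiles. *)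

From HB Require Import structures.
From mathcomp Require Import all_boot all_order all_algebra.
From mathcomp Require Import reals.
Set Implicit Arguments. Unset Strict Implicit. Unset Printing Implicit Defensive.
Import Order.TTheory GRing.Theory Num.Theory.
Local Open Scope ring_scope.

Section Trade.
Variables (R : realType) (M : nat).

Definition buyer_valid (beta : 'I_M -> R) : Prop := forall i, 0 <= beta i.

Definition bu (p beta : 'I_M -> R) (i : 'I_M) : R := beta i - p i.

Definition su (p : 'I_M -> R) (sigma : {set 'I_M} -> R) (i : 'I_M) : R :=
  p i + sigma ([set: 'I_M] :\ i) - sigma [set: 'I_M].

(* A mechanism maps reports (beta, sigma) to the trade probabilities
   r_1..r_M of the items; r_0 = 1 - sum_i r_i is the no-trade probability. *)
Definition mechanism := ('I_M -> R) -> ({set 'I_M} -> R) -> 'I_M -> R.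

Definition valid_mechanism (mech : mechanism) : Prop :=
  forall beta sigma, buyer_valid beta ->
    (forall i, 0 <= mech beta sigma i) /\ \sum_i mech beta sigma i <= 1.

Definition exp_buyer (p : 'I_M -> R) (r : 'I_M -> R) (beta : 'I_M -> R) : R :=
  \sum_i r i * bu p beta i.

Definition exp_seller (p : 'I_M -> R) (r : 'I_M -> R)
  (sigma : {set 'I_M} -> R) : R := \sum_i r i * su p sigma i.

(* Dominant-strategy incentive compatibility (option 0 gives utility 0). *)
Definition DSIC (p : 'I_M -> R) (mech : mechanism) : Prop :=
  (forall beta beta' sigma, buyer_valid beta -> buyer_valid beta' ->
     exp_buyer p (mech beta' sigma) beta <= exp_buyer p (mech beta sigma) beta)
  /\
  (forall beta sigma sigma', buyer_valid beta ->
     exp_seller p (mech beta sigma') sigma <= exp_seller p (mech beta sigma) sigma).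

(* OPT = max { b_i + s_i : 0 <= i <= M, b_i >= 0, s_i >= 0 }, b_0 = s_0 = 0 *)
Definition OPT (p beta : 'I_M -> R) (sigma : {set 'I_M} -> R) : R :=
  \big[Num.max/0]_(i | (0 <= bu p beta i) && (0 <= su p sigma i))
     (bu p beta i + su p sigma i).

Definition gain (p : 'I_M -> R) (mech : mechanism) beta sigma : R :=
  \sum_i mech beta sigma i * (bu p beta i + su p sigma i).

End Trade.

From HB Require Import structures.
From mathcomp Require Import all_boot all_order all_algebra.
From mathcomp Require Import reals ring lra.
From Stdlib Require Import Classical_Prop.
Import Order.TTheory GRing.Theory Num.Theory.
Local Open Scope ring_scope.

(* Fix buyer utilities b_0 < b_1 < ... < b_(M-1) growing geometrically, and
   consider M seller types: in type m the seller gains S on items below m,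
   nothing on item m and a large loss on items above m.  In type m, item m is
   the only trade worth about OPT >= b_m, so a ratio above 1/M + eps forces
   item m to be traded with probability almost 1/M + eps.  Seller DSIC between
   consecutive types then raises the seller's truthful utility by S times that
   probability at each step, so after M - 1 steps it exceeds what type M - 1
   can possibly get, about S (1 - 1/M - eps), although it starts from a
   bounded value in type 0. *)

Lemma weighted_sum_le_pivot {R : realDomainType} {I : finType} {r g : I -> R}
    (m : I) {c : R} :
  (forall i, 0 <= r i) -> \sum_i r i <= 1 -> 0 <= c ->
  (forall i, i != m -> g i <= c) ->
  \sum_i r i * g i <= r m * g m + (1 - r m) * c.
Proof.
move=> r_ge0 sum_r_le1 c_ge0 g_le.
rewrite (bigD1 m) //= lerD2l.
apply: (@le_trans _ _ ((\sum_(i | i != m) r i) * c)).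
  by rewrite mulr_suml; apply: ler_sum => i /g_le; apply: ler_wpM2l.
apply: ler_wpM2r => //.
by move: sum_r_le1; rewrite (bigD1 m) //=; lra.
Qed.

Section Utilities.
Context {R : realType} {M : nat} (p : 'I_M -> R).

Definition seller_of (t : 'I_M -> R) (X : {set 'I_M}) : R :=
  \sum_(j in ~: X) (t j - p j).

Lemma su_seller_of t i : su p (seller_of t) i = t i.
Proof.
rewrite /su /seller_of setCD -setTD setDv set0U big_set1 big_set0.
by rewrite subr0 addrC subrK.
Qed.

Lemma exp_seller_of r t : exp_seller p r (seller_of t) = \sum_i r i * t i.
Proof. by apply: eq_bigr => i _; rewrite su_seller_of. Qed.

Lemma DSIC_seller_of mech beta t t' : DSIC p mech -> buyer_valid beta ->
  \sum_i mech beta (seller_of t) i * t' i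
    <= \sum_i mech beta (seller_of t') i * t' i.
Proof.
move=> [_ seller_dsic] beta_valid.
have := seller_dsic beta (seller_of t') (seller_of t) beta_valid.
by rewrite !exp_seller_of.
Qed.

Lemma le_OPT beta sigma i : 0 <= bu p beta i -> 0 <= su p sigma i ->
  bu p beta i + su p sigma i <= OPT p beta sigma.
Proof. by move=> bu_ge0 su_ge0; apply: le_bigmax_cond; rewrite bu_ge0 su_ge0. Qed.

End Utilities.

Section Ladder.
Context {R : realType} {n : nat} {p : 'I_n.+1 -> R} {mech : mechanism R n.+1}.
Context {eps : R}.
Hypotheses (mech_valid : valid_mechanism mech) (mech_dsic : DSIC p mech).
Hypothesis eps_gt0 : 0 < eps.
Hypothesis ratio_ge : forall beta sigma, buyer_valid beta -> 0 < OPT p beta sigma ->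
  1 / n.+1%:R + eps <= gain p mech beta sigma / OPT p beta sigma.

(* Profile m: the buyer's utility for item i is b i and the seller's is t m i.
   As b_i + S <= b_m / K for i < m and L = 2 b_n, only item m is worth
   trading in profile m. *)
Let A : R := 1 + \sum_i `|p i|.
Let K : R := 1 + 2 / eps.
Let S : R := 8 * A / eps.
Let b (k : nat) : R := iter k (fun x => K * (x + S)) A.
Let L : R := 2 * b n.
Let t (m : nat) (i : 'I_n.+1) : R :=
  if (i < m)%N then S else if i == m :> nat then 0 else - L.
Let pivot (m : nat) : 'I_n.+1 := inord m.
Let beta (i : 'I_n.+1) : R := b i + p i.
Let sigma m := seller_of p (t m).
Let r m := mech beta (sigma m).
Let T m := \sum_i r m i * t m i.
Let rho : R := 1 / n.+1%:R + eps.

Lemma A_ge1 : 1 <= A.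
Proof. by rewrite lerDl; apply: sumr_ge0 => i _. Qed.

Lemma A_ge_price i : - p i <= A.
Proof.
have rest_ge0 : 0 <= \sum_(j | j != i) `|p j| by apply: sumr_ge0 => j _.
have := ler_norm (- p i); rewrite normrN /A (bigD1 i) //=; lra.
Qed.

Lemma S_ge0 : 0 <= S.
Proof. by apply: divr_ge0; [have := A_ge1; lra | exact: ltW]. Qed.

Lemma S_eps : S * eps = 8 * A.
Proof. by rewrite divfK // gt_eqF. Qed.

Lemma K_ge1 : 1 <= K.
Proof. by rewrite lerDl divr_ge0 // ltW. Qed.

Lemma K_gt0 : 0 < K.
Proof. exact: lt_le_trans ltr01 K_ge1. Qed.

Lemma invK_le : K^-1 <= eps / 2.
Proof.
rewrite -[K^-1]mulr1 ler_pdivrMl ?K_gt0 //.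
have -> : K * (eps / 2) = eps / 2 + 1 by rewrite /K; field; rewrite gt_eqF.
have := eps_gt0; lra.
Qed.

Lemma ladderS k : b k.+1 = K * (b k + S).
Proof. by []. Qed.

Lemma ladder_ge k : A <= b k.
Proof.
elim: k => [|k IH]; first exact: lexx.
rewrite ladderS; apply: le_trans (ler_peMl _ K_ge1); have := S_ge0; have := A_ge1; lra.
Qed.

Lemma ladder_gt0 k : 0 < b k.
Proof. exact: lt_le_trans ltr01 (le_trans A_ge1 (ladder_ge k)). Qed.

Lemma ladder_mono : {homo b : i j / (i <= j)%N >-> i <= j}.
Proof.
apply: homo_leq lexx le_trans _ => k.
rewrite ladderS; apply: le_trans (ler_peMl _ K_ge1);
  have := S_ge0; have := ladder_gt0 k; lra.
Qed.

Lemma ladder_below k i : (i < k)%N -> b i + S <= b k / K.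
Proof.
case: k => [//|k]; rewrite ltnS => le_ik.
by rewrite ladderS [K * _]mulrC mulfK ?gt_eqF ?K_gt0 // lerD2r ladder_mono.
Qed.

Lemma rho_ge0 : 0 <= rho.
Proof. by apply: addr_ge0; [rewrite div1r invr_ge0 ler0n | exact: ltW]. Qed.

Lemma rho_gap : 1 + eps / 2 <= n.+1%:R * (rho - K^-1).
Proof.
have N_ge1 : 1 <= n.+1%:R :> R by rewrite ler1n.
rewrite /rho mulrBr mulrDr div1r mulfV ?pnatr_eq0 //.
have := invK_le; have := eps_gt0; nra.
Qed.

Lemma beta_valid : buyer_valid beta.
Proof. by move=> i; have := A_ge_price i; have := ladder_ge i; rewrite /beta; lra. Qed.

Lemma bu_beta i : bu p beta i = b i.
Proof. by rewrite /bu /beta addrK. Qed.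

Lemma r_ge0 m i : 0 <= r m i.
Proof. exact: (mech_valid beta (sigma m) beta_valid).1. Qed.

Lemma sum_r_le1 m : \sum_i r m i <= 1.
Proof. exact: (mech_valid beta (sigma m) beta_valid).2. Qed.

Lemma pivotE m : (m <= n)%N -> pivot m = m :> nat.
Proof. exact: inordK. Qed.

Lemma eq_pivot m i : (m <= n)%N -> (i == pivot m) = (i == m :> nat).
Proof. by move=> le_mn; rewrite -val_eqE /= pivotE. Qed.

Lemma t_pivot m : (m <= n)%N -> t m (pivot m) = 0.
Proof. by move=> le_mn; rewrite /t pivotE // ltnn eqxx. Qed.

Lemma t_succ_pivot m : (m <= n)%N -> t m.+1 (pivot m) = S.
Proof. by move=> le_mn; rewrite /t pivotE // ltnSn. Qed.

Lemma t_le_S m i : t m i <= S.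
Proof.
have := S_ge0; have := ladder_gt0 n; rewrite /t /L.
by case: ifP => _; [lra | case: ifP => _; lra].
Qed.

Lemma t_le_succ m i : t m i <= t m.+1 i.
Proof.
have := S_ge0; have := ladder_gt0 n; rewrite /t /L ltnS.
by case: ltngtP => _; [lra | case: eqP => _; lra | lra].
Qed.

Lemma OPT_profile_ge m : (m <= n)%N -> b m <= OPT p beta (sigma m).
Proof.
move=> le_mn; have := le_OPT p beta (sigma m) (pivot m).
rewrite bu_beta su_seller_of t_pivot // pivotE // addr0; apply; last exact: lexx.
exact: ltW (ladder_gt0 m).
Qed.

Lemma gainE m : gain p mech beta (sigma m) = \sum_i r m i * (b i + t m i).
Proof. by apply: eq_bigr => i _; rewrite bu_beta su_seller_of. Qed.

Lemma gain_profile_ge m : (m <= n)%N -> rho * b m <= gain p mech beta (sigma m).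
Proof.
move=> le_mn; have OPT_ge := OPT_profile_ge m le_mn.
have OPT_gt0 := lt_le_trans (ladder_gt0 m) OPT_ge.
have := ratio_ge beta (sigma m) beta_valid OPT_gt0; rewrite ler_pdivlMr //.
exact/le_trans/ler_wpM2l/OPT_ge/rho_ge0.
Qed.

Lemma gain_profile_le m : (m <= n)%N ->
  gain p mech beta (sigma m) <= r m (pivot m) * b m + b m / K.
Proof.
move=> le_mn; have c_ge0 : 0 <= b m / K by rewrite divr_ge0 ?ltW ?ladder_gt0 ?K_gt0.
rewrite gainE; apply: le_trans
  (weighted_sum_le_pivot (pivot m) (r_ge0 m) (sum_r_le1 m) c_ge0 _) _.
- move=> i; rewrite eq_pivot // /t; case: ltnP => [/ladder_below //|_ /negbTE ->].
  have := ladder_mono _ _ (leq_ord i); have := ladder_gt0 n; rewrite /L; lra.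
- rewrite t_pivot // pivotE // addr0; have := r_ge0 m (pivot m); nra.
Qed.

Lemma pivot_prob_ge m : (m <= n)%N -> rho - K^-1 <= r m (pivot m).
Proof.
move=> le_mn; have := le_trans (gain_profile_ge m le_mn) (gain_profile_le m le_mn).
by move=> gain_bounds; rewrite -(ler_pM2r (ladder_gt0 m)) mulrBl; lra.
Qed.

Lemma seller_utility_step m : (m < n)%N -> T m + S * r m (pivot m) <= T m.+1.
Proof.
move=> lt_mn; have le_mn := ltnW lt_mn.
apply: le_trans (DSIC_seller_of p mech beta (t m) (t m.+1) mech_dsic beta_valid).
rewrite -/(sigma m) -/(r m) /T (bigD1 (pivot m)) //= [X in _ <= X](bigD1 (pivot m)) //=.
rewrite t_pivot // t_succ_pivot // mulr0 add0r.
have : \sum_(i | i != pivot m) r m i * t m i <= \sum_(i | i != pivot m) r m i * t m.+1 i.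
  by apply: ler_sum => i _; apply: ler_wpM2l; [exact: r_ge0 | exact: t_le_succ].
lra.
Qed.

Lemma seller_utility_last_le : T n <= S * (1 - r n (pivot n)).
Proof.
apply: le_trans (weighted_sum_le_pivot (pivot n) (r_ge0 n) (sum_r_le1 n) S_ge0
  (fun i _ => t_le_S n i)) _.
by rewrite t_pivot // mulr0 add0r mulrC.
Qed.

Lemma seller_utility_first_ge : - (2 * A) <= T 0.
Proof.
have gain_ge0 : 0 <= gain p mech beta (sigma 0).
  exact: le_trans (mulr_ge0 rho_ge0 (ltW (ladder_gt0 0))) (gain_profile_ge 0 (leq0n n)).
have r_pivot_le1 : r 0 (pivot 0) <= 1.
  have := sum_r_le1 0; rewrite (bigD1 (pivot 0)) //=.
  have : 0 <= \sum_(i | i != pivot 0) r 0 i by apply: sumr_ge0 => i _; apply: r_ge0.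
  lra.
have rest : \sum_(i | i != pivot 0) r 0 i * (b i + t 0 i)
    <= (\sum_(i | i != pivot 0) r 0 i * t 0 i) / 2.
  rewrite mulr_suml; apply: ler_sum => i; rewrite eq_pivot // /t ltn0 => /negbTE ->.
  rewrite -mulrA; apply: ler_wpM2l; first exact: r_ge0.
  have := ladder_mono _ _ (leq_ord i); rewrite /L; lra.
have pivot_gain_le : r 0 (pivot 0) * b 0 <= A.
  exact: ler_piMl (ltW (ladder_gt0 0)) r_pivot_le1.
move: gain_ge0; rewrite /T (bigD1 (pivot 0)) //= gainE (bigD1 (pivot 0)) //=.
rewrite t_pivot // pivotE // addr0 mulr0 add0r; lra.
Qed.

Lemma seller_utility_growth m : (m <= n)%N -> T 0 + m%:R * (S * (rho - K^-1)) <= T m.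
Proof.
elim: m => [|m IH] lt_mn; first by rewrite mul0r addr0.
have := seller_utility_step m lt_mn; have := IH (ltnW lt_mn).
have := ler_wpM2l S_ge0 (pivot_prob_ge m (ltnW lt_mn)).
rewrite -(natr1 m) mulrDl mul1r; lra.
Qed.

Lemma no_DSIC_ratio_above_inv_card : False.
Proof.
have := seller_utility_growth n (leqnn n); have := seller_utility_last_le.
have := seller_utility_first_ge.
have := ler_wpM2l S_ge0 (pivot_prob_ge n (leqnn n)).
have := ler_wpM2l S_ge0 rho_gap.
rewrite -(natr1 n) mulrDl mul1r.
have := S_eps; have := A_ge1; have := eps_gt0; lra.
Qed.

End Ladder.

Theorem corollary2 (R : realType) (M : nat) (hM : (1 <= M)%N)
    (p : 'I_M -> R) (mech : mechanism R M) :
  valid_mechanism mech -> DSIC p mech ->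
  forall eps : R, 0 < eps ->
    exists (beta : 'I_M -> R) (sigma : {set 'I_M} -> R),
      [/\ buyer_valid beta, 0 < OPT p beta sigma &
          gain p mech beta sigma / OPT p beta sigma < 1 / M%:R + eps].
Proof.
move=> mech_valid mech_dsic eps eps_gt0.
case: M hM p mech mech_valid mech_dsic => [//|n] _ p mech mech_valid mech_dsic.
apply: NNPP => no_witness.
apply: (no_DSIC_ratio_above_inv_card mech_valid mech_dsic eps_gt0).
move=> beta sigma beta_valid OPT_gt0.
rewrite leNgt; apply/negP => ratio_lt; apply: no_witness.
by exists beta, sigma; split.
Qed.
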